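(* Let $d\ge1$ and let $D_d=\bigl(\binom{d-j}{d-i}\bigr)_{1\le i,j\le d}$, with the convention $\binom{r}{s}=0$ if $s<0$ or $s>r$ (so $D_d$ is lower unitriangular). For any $0\le m\le d-1$, the $(d-m)\times(d-m)$ matrix obtained from $D_d$ by deleting its last $m$ columns and any $m$ consecutive rows has determinant $1$.
   Context: Standard binomial coefficients; the only convention is $\binom{r}{s}=0$ for $s<0$ or $s>r$ with $r\ge0$. *)

From mathcomp Require Import all_boot all_order all_algebra.
Set Implicit Arguments. Unset Strict Implicit. Unset Printing Implicit Defensive.
Import GRing.Theory.
Local Open Scope ring_scope.

(* Entry (i,j) of D_d, with the paper's 1-based indices 1 <= i, j <= d:
   binom(d-j, d-i).  MathComp's 'C(r, s) is 0 for s > r, matching the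
   paper's convention (here r, s >= 0 always since i, j <= d). *)
Definition Dentry (d i j : nat) : int := ('C(d - j, d - i))%:Z.

Definition Dmat (d : nat) : 'M[int]_d := \matrix_(i < d, j < d) Dentry d i.+1 j.+1.

(* 1-based original row index of the (0-based) row i of the matrix obtained by
   deleting the m consecutive rows k+1, ..., k+m (1-based) of D_d. *)
Definition kept_row (k m i : nat) : nat := if (i < k)%N then i.+1 else (i + m).+1.

(* D_d with its last m columns deleted and rows k+1..k+m deleted
   (requires k + m <= d); a (d-m) x (d-m) matrix. Columns 1..d-m are kept. *)
Definition Dminor (d m k : nat) : 'M[int]_(d - m) :=
  \matrix_(i < d - m, j < d - m) Dentry d (kept_row k m i) j.+1.

From mathcomp Require Import all_boot all_order all_algebra.
From mathcomp Require Import zify.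
Set Implicit Arguments. Unset Strict Implicit. Unset Printing Implicit Defensive.
Import GRing.Theory.

(* If k >= 1, the first kept row of the minor is row 1 of D_d, i.e. (1, 0, ..., 0),
   and its cofactor is the same kind of minor of D_(d-1) with k - 1 in place of k.
   This reduces to k = 0: with n = d - m, Vandermonde's convolution factors the
   kept block (C(m + n-1-j, n-1-i)) as the upper unitriangular (C(m, w - i))
   times the lower unitriangular (C(n-1-j, n-1-w)). *)

Lemma Vandermonde_shifted (m n : nat) (i j : 'I_n) :
  'C(m + (n.-1 - j), n.-1 - i) =
  (\sum_(w < n) ((i <= w) * 'C(m, w - i) * 'C(n.-1 - j, n.-1 - w)))%N.
Proof.
have lt_i_n := ltn_ord i.
rewrite addnC -binomial.Vandermonde.
rewrite (big_ord_widen n (fun u => 'C(n.-1 - j, u) * 'C(m, n.-1 - i - u))%N);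
  last by lia.
rewrite big_mkcond (reindex_inj rev_ord_inj) /=.
apply: eq_bigr => w _; have lt_w_n := ltn_ord w.
have -> : (n - w.+1 < (n.-1 - i).+1)%N = (i <= w)%N by lia.
case: (leqP i w) => [le_iw|]; last by rewrite mul0n.
have -> : (n - w.+1 = n.-1 - w)%N by lia.
have -> : (n.-1 - i - (n.-1 - w))%N = (w - i)%N by lia.
by rewrite mul1n mulnC.
Qed.

Local Open Scope ring_scope.

Definition Dsubmx (d m k n : nat) : 'M[int]_n :=
  \matrix_(i < n, j < n) Dentry d (kept_row k m i) j.+1.

Lemma Dminor_Dsubmx (d m k : nat) : Dminor d m k = Dsubmx d m k (d - m).
Proof. by []. Qed.

Lemma Dsubmx_top_factor (d m n : nat) : (n + m)%N = d ->
  Dsubmx d m 0 n =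
  (\matrix_(i < n, w < n) ((i <= w) * 'C(m, w - i))%N%:Z) *m
  (\matrix_(w < n, j < n) ('C(n.-1 - j, n.-1 - w))%:Z).
Proof.
move=> def_d; apply/matrixP => i j; rewrite !mxE /Dentry /kept_row /=.
have lt_i_n := ltn_ord i; have lt_j_n := ltn_ord j.
have -> : (d - j.+1 = m + (n.-1 - j))%N by lia.
have -> : (d - (i + m).+1 = n.-1 - i)%N by lia.
rewrite Vandermonde_shifted (big_morph Posz PoszD (erefl _)).
by apply: eq_bigr => w _; rewrite !mxE PoszM.
Qed.

Lemma det_Dsubmx_top (d m n : nat) : (n + m)%N = d -> \det (Dsubmx d m 0 n) = 1.
Proof.
move=> def_d; rewrite Dsubmx_top_factor // det_mulmx -det_tr !det_trig.
- by rewrite !big1 ?mulr1 // => i _; rewrite !mxE ?leqnn ?subnn ?bin0 ?binn.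
- apply/is_trig_mxP => w j lt_jw; rewrite !mxE bin_small //.
  by have := ltn_ord j; have := ltn_ord w; lia.
- by apply/is_trig_mxP => w i lt_iw; rewrite !mxE leqNgt lt_iw.
Qed.

Lemma Dsubmx_row0 (d m k n : nat) (j : 'I_n.+1) : (n <= d)%N ->
  Dsubmx d.+1 m k.+1 n.+1 ord0 j = (j == ord0)%:R.
Proof.
move=> le_n_d; rewrite mxE /Dentry /kept_row /= subn1 /=.
have [->|nz_j] := eqVneq j ord0; first by rewrite subSS subn0 binn.
by rewrite bin_small //; case: j nz_j => -[|j] //= lt_j_n _; lia.
Qed.

Lemma Dsubmx_cofactor00 (d m k n : nat) :
  row' ord0 (col' ord0 (Dsubmx d.+1 m k.+1 n.+1)) = Dsubmx d m k n.
Proof.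
apply/matrixP => i j; rewrite !mxE /Dentry /kept_row /= /bump /= !add1n ltnS.
by case: ifP.
Qed.

Lemma det_Dsubmx (d m k n : nat) :
  (n + m)%N = d -> (k + m <= d)%N -> \det (Dsubmx d m k n) = 1.
Proof.
elim: k d n => [|k IHk] d n def_d le_km_d; first exact: det_Dsubmx_top.
case: n def_d => [|n] def_d; first lia.
case: d def_d le_km_d => [|d] def_d le_km_d; first lia.
rewrite (expand_det_row _ ord0) big_ord_recl big1 => [|j _]; last first.
  by rewrite Dsubmx_row0 ?mul0r //; lia.
rewrite Dsubmx_row0; last by lia.
rewrite eqxx mul1r addr0 /cofactor expr0 mul1r Dsubmx_cofactor00.
by apply: IHk; lia.
Qed.

Theorem lemma5p11 (d m k : nat) :
  (1 <= d)%N -> (m <= d - 1)%N -> (k + m <= d)%N ->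
  \det (Dminor d m k) = 1.
Proof.
move=> ge1_d le_m_d le_km_d; rewrite Dminor_Dsubmx.
by apply: det_Dsubmx; lia.
Qed.
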